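(* Let $1\le N\le M$ and let $u_1,\dots,u_N$ satisfy the genericity conditions: pairwise distinct, $au_j+b\neq0$, $eu_j+f\neq0$, $tu_j\neq u_k$ for $j\neq k$. Let $\mathcal{C}_N^{(1)},\dots,\mathcal{C}_N^{(N)}$ be any $2^N\times2^N$ matrices with $\sum_j\mathcal{C}_N^{(j)}=\mathcal{C}_N$ satisfying, for all $j$ and $k\neq j$, $\mathcal{C}_N^{(j)}\mathcal{A}_N=\frac{eu_j+f}{au_j+b}\mathcal{A}_N\mathcal{C}_N^{(j)}$, $(\mathcal{C}_N^{(j)})^2=0$, $\mathcal{C}_N^{(j)}\mathcal{C}_N^{(k)}=\frac{(eu_j+f)(au_k+b)(u_j-tu_k)}{(au_j+b)(eu_k+f)(tu_j-u_k)}\mathcal{C}_N^{(k)}\mathcal{C}_N^{(j)}$ (such matrices exist). Set \[K=\prod_{j=1}^N\Big(\frac{au_j+b}{eu_j+f}\Big)^j\,\mathrm{Tr}\big[Q\,\mathcal{A}_N^{M-N}\mathcal{C}_N^{(N)}\cdots\mathcal{C}_N^{(1)}\big].\] Then for every particle configuration $1\le x_1<\dots<x_N\le M$, \[\langle x_1\cdots x_N|B(u_N)\cdots B(u_1)|\Omega\rangle=K\sum_{\sigma\in S_N}\prod_{(j,k)\in\mathrm{Inv}(\sigma)}\frac{u_{\sigma(k)}-tu_{\sigma(j)}}{tu_{\sigma(k)}-u_{\sigma(j)}}\prod_{j=1}^N\Big(\frac{eu_{\sigma(j)}+f}{au_{\sigma(j)}+b}\Big)^{x_j}.\]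
   Context: Fix complex parameters $t,a,b,c,d,e,f$, all nonzero, with $t\neq1$, satisfying $cd+af=0$ and $tcd+be=0$. The $L$-operator $L_{aj}(u)$ on $W_a\otimes V_j$ ($W_a\cong V_j\cong\mathbb{C}^2$ with basis $|0\rangle,|1\rangle$) has matrix elements $[L(u)]^{\gamma\delta}_{\alpha\beta}={}_a\langle\gamma|{}_j\langle\delta|L_{aj}(u)|\alpha\rangle_a|\beta\rangle_j$: $[L]^{00}_{00}=au+b$, $[L]^{01}_{01}=atu+b$, $[L]^{01}_{10}=(1-t)cu$, $[L]^{10}_{01}=(1-t)d$, $[L]^{10}_{10}=eu+f$, $[L]^{11}_{11}=eu+tf$, all others $0$. Monodromy $T_a(u)=L_{aM}(u)\cdots L_{a1}(u)$, $B(u)={}_a\langle0|T_a(u)|1\rangle_a$. $|\Omega\rangle=|0\rangle^{\otimes M}$; $|x_1\cdots x_N\rangle$ has $|1\rangle$ at sites $x_j$ and $|0\rangle$ elsewhere; bras are duals. For $\sigma\in S_N$, $\mathrm{Inv}(\sigma)=\{(j,k):j<k,\ \sigma(j)>\sigma(k)\}$. $X\otimes Y$ is the Kronecker product $(X_{ik}Y)_{i,k}$. The matrices $\mathcal{A}_n,\mathcal{C}_n$ are defined by $\mathcal{A}_1=\mathrm{diag}(au_1+b,eu_1+f)$, $\mathcal{C}_1=\begin{pmatrix}0&(1-t)cu_1\\0&0\end{pmatrix}$, $\mathcal{A}_{n+1}=\mathrm{diag}(au_{n+1}+b,eu_{n+1}+f)\otimes\mathcal{A}_n+\begin{pmatrix}0&0\\(1-t)d&0\end{pmatrix}\otimes\mathcal{C}_n$,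 $\mathcal{C}_{n+1}=\begin{pmatrix}0&(1-t)cu_{n+1}\\0&0\end{pmatrix}\otimes\mathcal{A}_n+\mathrm{diag}(atu_{n+1}+b,eu_{n+1}+tf)\otimes\mathcal{C}_n$. Rows/columns of $2^N\times 2^N$ matrices are indexed by $(i_N,\dots,i_1)\in\{0,1\}^N$ consistent with this Kronecker structure (index $0$ first in each factor); $Q$ is the $2^N\times2^N$ matrix with a single entry $1$ in row $(1,\dots,1)$, column $(0,\dots,0)$, and zeros elsewhere (i.e. $Q=|1^N\rangle\langle0^N|$). *)

From HB Require Import structures.
From mathcomp Require Import all_boot all_order all_algebra all_fingroup.
Set Implicit Arguments. Unset Strict Implicit. Unset Printing Implicit Defensive.
Import Order.TTheory GRing.Theory Num.Theory.
Local Open Scope ring_scope.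

Section Defs.
Variable R : numClosedFieldType.

(* The L-operator: Lent t a b c d e f u g dl al be = [L(u)]^{g dl}_{al be}
   (g = gamma, dl = delta, al = alpha, be = beta; false = |0>, true = |1>). *)
Definition Lent (t a b c d e f u : R) (g dl al be : bool) : R :=
  match al, be, g, dl with
  | false, false, false, false => a * u + b
  | false, true,  false, true  => a * t * u + b
  | true,  false, false, true  => (1 - t) * c * u
  | false, true,  true,  false => (1 - t) * d
  | true,  false, true,  false => e * u + f
  | true,  true,  true,  true  => e * u + t * f
  | _, _, _, _ => 0
  end.

(* Basis states of V_1 (x) ... (x) V_M : occupation functions; site s+1 <-> s : 'I_M. *)
Definition state (M : nat) := {ffun 'I_M -> bool}.

(* Matrix elements of the monodromy T_a(u) = L_{aM}(u) ... L_{a1}(u):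
   monod ... u y x g al = <g|_a <y| T_a(u) |al>_a |x>.
   Obtained by multiplying in the L-operators of sites 1, 2, ..., M in turn
   (L_{a1} is rightmost), summing over the intermediate auxiliary index. *)
Definition monod (t a b c d e f : R) (M : nat) (u : R) (y x : state M)
    : bool -> bool -> R :=
  foldl (fun (T : bool -> bool -> R) (s : 'I_M) =>
           fun g al => \sum_(cc : bool) Lent t a b c d e f u g (y s) cc (x s) * T cc al)
        (fun g al => (g == al)%:R) (enum 'I_M).

(* Matrix elements of B(u) = <0|_a T_a(u) |1>_a :  <y|B(u)|x>. *)
Definition Bel (t a b c d e f : R) (M : nat) (u : R) (y x : state M) : R :=
  monod t a b c d e f u y x false true.

(* Components of B(u_n) ... B(u_1) |Omega>  (spectral parameters u_j = u (j-1)). *)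
Fixpoint Bvec (t a b c d e f : R) (M : nat) (u : nat -> R) (n : nat) : state M -> R :=
  match n with
  | 0 => fun y => (y == [ffun => false])%:R
  | n'.+1 => fun y => \sum_(x : state M) Bel t a b c d e f (u n') y x * Bvec t a b c d e f u n' x
  end.

(* |x_1 ... x_N> : |1> at the sites x_j (1-based), |0> elsewhere. *)
Definition config (M N : nat) (x : 'I_N -> nat) : state M :=
  [ffun s : 'I_M => [exists j : 'I_N, x j == (s : nat).+1]].

Definition kron2 (p : nat) (X : 'M[R]_2) (Y : 'M[R]_p) : 'M[R]_(p + p) :=
  block_mx (X ord0 ord0 *: Y) (X ord0 ord_max *: Y)
           (X ord_max ord0 *: Y) (X ord_max ord_max *: Y).

Lemma expS2 (n : nat) : (2 ^ n + 2 ^ n)%N = (2 ^ n.+1)%N.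
Proof. by rewrite addnn -mul2n expnS. Qed.

Definition mx2 (p q r s : R) : 'M[R]_2 :=
  \matrix_(i < 2, j < 2)
    if (i : nat) == 0%N then (if (j : nat) == 0%N then p else q)
    else (if (j : nat) == 0%N then r else s).

(* AC n = (A_n, C_n) with A_0 = 1, C_0 = 0 (which reproduces the paper's A_1, C_1);
   level n+1 uses u_{n+1} = u n. *)
Fixpoint AC (t a b c d e f : R) (u : nat -> R) (n : nat) : 'M[R]_(2 ^ n) * 'M[R]_(2 ^ n) :=
  match n with
  | 0 => (1%:M, 0)
  | n'.+1 =>
      let A := (AC t a b c d e f u n').1 in
      let C := (AC t a b c d e f u n').2 in
      let v := u n' in
      (castmx (expS2 n', expS2 n')
         (kron2 (mx2 (a * v + b) 0 0 (e * v + f)) A + kron2 (mx2 0 0 ((1 - t) * d) 0) C),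
       castmx (expS2 n', expS2 n')
         (kron2 (mx2 0 ((1 - t) * c * v) 0 0) A + kron2 (mx2 (a * t * v + b) 0 0 (e * v + t * f)) C))
  end.

Definition Amx t a b c d e f u n := (AC t a b c d e f u n).1.
Definition Cmx t a b c d e f u n := (AC t a b c d e f u n).2.

(* Q = |1^N><0^N| : row (1,...,1) has index 2^N - 1, column (0,...,0) index 0. *)
Definition Qmx (N : nat) : 'M[R]_(2 ^ N) :=
  \matrix_(i, j) (((i : nat) == (2 ^ N).-1) && ((j : nat) == 0%N))%:R.

(* Product C^{(N)} C^{(N-1)} ... C^{(1)} (C^{(j)} = Cj (j-1)). *)
Definition Cprod (N : nat) (Cj : 'I_N -> 'M[R]_(2 ^ N)) : 'M[R]_(2 ^ N) :=
  foldr (fun j acc => Cj j *m acc) 1%:M (rev (enum 'I_N)).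

(* Matrix power X^k for a (not necessarily n.+1-indexed) square matrix. *)
Definition mxpow (p : nat) (X : 'M[R]_p) (k : nat) : 'M[R]_p := iter k (mulmx X) 1%:M.

End Defs.
Arguments Qmx {R} N.

From HB Require Import structures.
From mathcomp Require Import all_boot all_order all_algebra all_fingroup.
From mathcomp Require Import ring zify.
Import Order.TTheory GRing.Theory Num.Theory.
Local Open Scope ring_scope.
Set Implicit Arguments. Unset Strict Implicit. Unset Printing Implicit Defensive.

(* Iterating the Kronecker recursion of A_n and C_n along the monodromy shows that the
   components of B(u_N)...B(u_1)|Omega> are the (0^N, 1^N) entries of the ordered product
   X_M ... X_1, with X_s = C_N at occupied sites and A_N elsewhere.  As A_N is invertible,
   D_j = C^(j) A_N^-1 satisfies D_j A_N = r_j A_N D_j with r_j = (e u_j + f)/(a u_j + b),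
   D_j^2 = 0 and D_j D_k = theta_jk D_k D_j.  Pushing every A_N to the left turns the product
   into A_N^M prod_j (sum_k r_k^(x_j) D_k); expanding, only the words using each D_k once
   survive, and sorting the word of a permutation sigma costs the product of theta over the
   inversions of sigma.  Finally A_N^N D_N ... D_1 = prod_j r_j^-j C^(N) ... C^(1), and the
   (0^N, 1^N) entry is the trace against Q. *)

Lemma enum_index_enum (T : finType) : enum T = index_enum T.
Proof. by rewrite enumT [index_enum _]unlock. Qed.

Lemma big_rev_enum_ord (T : Type) (idx : T) (op : Monoid.law idx) n (F : 'I_n -> T) :
  \big[op/idx]_(i <- rev (enum 'I_n)) F i = \big[op/idx]_(i < n) F (rev_ord i).
Proof.
have -> : rev (enum 'I_n) = map (@rev_ord n) (enum 'I_n).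
  apply: (inj_map val_inj); rewrite map_rev val_enum_ord -map_comp.
  apply: (@eq_from_nth _ 0%N); first by rewrite size_rev size_map size_enum_ord size_iota.
  move=> i; rewrite size_rev size_iota => lt_i_n.
  rewrite nth_rev ?size_iota // nth_iota; last by rewrite subnSK ?leq_subr.
  by rewrite (nth_map (Ordinal lt_i_n)) ?size_enum_ord //= nth_enum_ord.
by rewrite big_map enum_index_enum.
Qed.

Lemma big_rev_enum_distr (T : pzSemiRingType) n (J : finType) (F : 'I_n -> J -> T) :
  \prod_(i <- rev (enum 'I_n)) \sum_(j : J) F i j
  = \sum_(g : {ffun 'I_n -> J}) \prod_(i <- rev (enum 'I_n)) F i (g i).
Proof.
rewrite big_rev_enum_ord bigA_distr_bigA /=.
have rev_inj : injective (fun g : {ffun 'I_n -> J} => [ffun i => g (rev_ord i)]).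
  move=> g h /ffunP eq_gh; apply/ffunP => i.
  by have := eq_gh (rev_ord i); rewrite !ffunE rev_ordK.
rewrite (reindex_inj rev_inj); apply: eq_bigr => g _.
by rewrite big_rev_enum_ord; apply: eq_bigr => i _; rewrite ffunE.
Qed.

Lemma rev_iotaS n : rev (iota 0 n.+1) = n :: rev (iota 0 n).
Proof. by rewrite -addn1 iotaD rev_cat. Qed.

Lemma big_rev_enum_iota (T : Type) (idx : T) (op : Monoid.law idx) n (F : nat -> T) :
  \big[op/idx]_(i <- rev (enum 'I_n)) F i = \big[op/idx]_(m <- rev (iota 0 n)) F m.
Proof. by rewrite -(big_map val xpredT) map_rev val_enum_ord. Qed.

Lemma big_rev_enum_inord (T : Type) (idx : T) (op : Monoid.law idx) n (F : 'I_n.+1 -> T) :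
  \big[op/idx]_(i <- rev (enum 'I_n.+1)) F i = \big[op/idx]_(m <- rev (iota 0 n.+1)) F (inord m).
Proof.
rewrite -(big_rev_enum_iota _ _ (fun m => F (inord m))).
by apply: eq_bigr => i _; rewrite inord_val.
Qed.

Lemma prodr_mem_eq0 (T : pzSemiRingType) (I : eqType) (r : seq I) (F : I -> T) i :
  i \in r -> F i = 0 -> \prod_(j <- r) F j = 0.
Proof.
elim: r => [|j r IHr] //; rewrite inE big_cons => /orP [/eqP <- -> | /IHr IHi Fi0].
  by rewrite mul0r.
by rewrite IHi // mulr0.
Qed.

Lemma castmx_prod (R : pzSemiRingType) m m' (eq_m : m = m') (I : Type) (r : seq I)
    (F : I -> 'M[R]_m) :
  castmx (eq_m, eq_m) (\prod_(i <- r) F i) = \prod_(i <- r) castmx (eq_m, eq_m) (F i).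
Proof. by case: m' / eq_m; under [RHS]eq_bigr do rewrite castmx_id; rewrite castmx_id. Qed.

Lemma det_castmx (R : comPzRingType) m m' (eq_m : m = m') (A : 'M[R]_m) :
  \det (castmx (eq_m, eq_m) A) = \det A.
Proof. by case: m' / eq_m; rewrite castmx_id. Qed.

Section ScaleMx.
Variables (R : comPzSemiRingType) (p : nat).
Implicit Types (A B : 'M[R]_p) (k : R).

Lemma scalemx_mull k A B : k *: A * B = k *: (A * B).
Proof. by rewrite [RHS]scalemxAl. Qed.

Lemma scalemx_mulr k A B : A * (k *: B) = k *: (A * B).
Proof. by rewrite [RHS]scalemxAr. Qed.

Lemma scalemx_prod (I : Type) (r : seq I) (k : I -> R) (F : I -> 'M[R]_p) :
  \prod_(i <- r) (k i *: F i) = (\prod_(i <- r) k i) *: \prod_(i <- r) F i.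
Proof.
elim: r => [|i r IHr]; first by rewrite !big_nil scale1r.
by rewrite !big_cons IHr scalemx_mull scalemx_mulr scalerA.
Qed.

End ScaleMx.

Section Kron2.
Variable R : numClosedFieldType.

Definition b2o (g : bool) : 'I_2 := if g then ord_max else ord0.
Definition o2b (i : 'I_2) : bool := (i : nat) == 1%N.

Lemma b2oK : cancel b2o o2b. Proof. by case. Qed.

Definition kron_idx p (g : bool) (i : 'I_p) : 'I_(p + p) :=
  if g then rshift p i else lshift p i.

Lemma kron2E p (X : 'M[R]_2) (Y : 'M[R]_p) g h i j :
  kron2 X Y (kron_idx g i) (kron_idx h j) = X (b2o g) (b2o h) * Y i j.
Proof.
by case: g; case: h;
  rewrite /kron2 /kron_idx ?block_mxEul ?block_mxEur ?block_mxEdl ?block_mxEdr mxE.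
Qed.

Lemma kron2_mul p (X Z : 'M[R]_2) (Y W : 'M[R]_p) :
  kron2 X Y * kron2 Z W = kron2 (X * Z) (Y * W).
Proof.
have sum2 (F : 'I_2 -> R) : \sum_(k < 2) F k = F ord0 + F ord_max.
  by rewrite big_ord_recr big_ord1; congr (F _ + F _); apply: val_inj.
rewrite /kron2 [_ * _]mulmx_block !mxE !sum2.
by rewrite -!scalemxAl -!scalemxAr !scalerA -!scalerDl.
Qed.

Lemma kron2_1 p : kron2 (1 : 'M[R]_2) (1 : 'M[R]_p) = 1.
Proof. by rewrite /kron2 !mxE /= !scale1r !scale0r [RHS](scalar_mx_block p p). Qed.

Lemma kron2_prod p (I : Type) (r : seq I) (X : I -> 'M[R]_2) (Y : I -> 'M[R]_p) :
  kron2 (\prod_(i <- r) X i) (\prod_(i <- r) Y i) = \prod_(i <- r) kron2 (X i) (Y i).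
Proof.
elim: r => [|i r IHr]; first by rewrite !big_nil kron2_1.
by rewrite !big_cons -kron2_mul IHr.
Qed.

End Kron2.

Lemma expn2_gt0 n : (0 < 2 ^ n)%N. Proof. by rewrite expn_gt0. Qed.
Lemma expn2_pred_lt n : ((2 ^ n).-1 < 2 ^ n)%N. Proof. by rewrite ltn_predL expn2_gt0. Qed.

Definition zeros_idx n : 'I_(2 ^ n) := Ordinal (expn2_gt0 n).
Definition ones_idx n : 'I_(2 ^ n) := Ordinal (expn2_pred_lt n).

Lemma mxtrace_Qmx (R : numClosedFieldType) n (X : 'M[R]_(2 ^ n)) :
  \tr (Qmx n *m X) = X (zeros_idx n) (ones_idx n).
Proof.
have Qmx0 i j : i != ones_idx n -> Qmx n i j = 0.
  by move=> ne_i; rewrite mxE; case: eqP => // eq_i; case/eqP: ne_i; apply: val_inj.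
rewrite /mxtrace (bigD1 (ones_idx n)) //= big1 ?addr0 => [|i ne_i]; last first.
  by rewrite mxE big1 // => j _; rewrite Qmx0 ?mul0r.
rewrite mxE (bigD1 (zeros_idx n)) //= big1 ?addr0 => [|j ne_j]; last first.
  rewrite mxE /= eqxx andTb; case: eqP => [eq_j|]; last by rewrite mul0r.
  by case/eqP: ne_j; apply: val_inj.
by rewrite mxE !eqxx mul1r.
Qed.

Lemma mxpowE (R : numClosedFieldType) p (X : 'M[R]_p) k : mxpow X k = X ^+ k.
Proof. by elim: k => [|k IHk] //; rewrite [LHS]/= IHk exprS. Qed.

Section TransferMatrix.
Variables (R : numClosedFieldType) (t a b c d e f : R) (u : nat -> R) (M : nat).

Definition Lmx (v : R) (dl be : bool) : 'M[R]_2 :=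
  \matrix_(i, j) Lent t a b c d e f v (o2b i) dl (o2b j) be.

Lemma monodE (v : R) (y x : state M) g h :
  monod t a b c d e f v y x g h
  = (\prod_(s <- rev (enum 'I_M)) Lmx v (y s) (x s)) (b2o g) (b2o h).
Proof.
have foldlE l T0 (P0 : 'M[R]_2) : (forall g h, T0 g h = P0 (b2o g) (b2o h)) ->
    forall g h, foldl (fun (T : bool -> bool -> R) (s : 'I_M) => fun g h =>
        \sum_(cc : bool) Lent t a b c d e f v g (y s) cc (x s) * T cc h) T0 l g h
    = ((\prod_(s <- rev l) Lmx v (y s) (x s)) *m P0) (b2o g) (b2o h).
  elim: l T0 P0 => [|s l IHl] T0 P0 T0E g' h' /=; first by rewrite big_nil mul1mx T0E.
  rewrite (IHl _ (Lmx v (y s) (x s) *m P0)); first by rewrite rev_cons big_rcons -mulmxA.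
  move=> g1 h1; rewrite mxE big_ord_recr big_ord1 big_bool /= !mxE !b2oK addrC !T0E.
  by congr (_ * _ + _ * _); congr (P0 _ _); apply: val_inj.
rewrite /monod (@foldlE _ _ 1%:M) ?mulmx1 // => g' h'.
by rewrite mxE; case: g'; case: h'.
Qed.

Definition ACmx n (occupied : bool) : 'M[R]_(2 ^ n) :=
  if occupied then Cmx t a b c d e f u n else Amx t a b c d e f u n.

Lemma ACmx_succ n occupied :
  ACmx n.+1 occupied = castmx (expS2 n, expS2 n)
    (\sum_(occupied' : bool) kron2 (Lmx (u n) occupied occupied') (ACmx n occupied')).
Proof.
rewrite big_bool /= addrC.
case: occupied; rewrite /ACmx /Cmx /Amx /=; congr castmx; congr (_ + _); congr kron2;
  apply/matrixP => i j; rewrite !mxE;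
  case: i => [[|[|?]] ?] //; case: j => [[|[|?]] ?] //.
Qed.

Lemma Bvec_ACmx n (y : state M) :
  Bvec t a b c d e f u n y
  = (\prod_(s <- rev (enum 'I_M)) ACmx n (y s)) (zeros_idx n) (ones_idx n).
Proof.
elim: n y => [|n IHn] y /=.
  case: eqP => [-> | ne_y].
    by rewrite (eq_bigr (fun _ => 1)) => [|s _]; rewrite ?ffunE // big1_eq mxE.
  have [s ys] : exists s, y s.
    apply/existsP; apply: contraNT (introN eqP ne_y) => /existsPn ys.
    by apply/eqP/ffunP => s; rewrite ffunE; apply/negbTE/ys.
  by rewrite (@prodr_mem_eq0 _ _ _ _ s) ?mxE ?mem_rev ?mem_enum // /ACmx ys.
under [LHS]eq_bigr => x _ do
  rewrite IHn /Bel monodE -(kron2E _ _ false true) kron2_prod.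
rewrite -summxE -(big_rev_enum_distr (fun s o => kron2 (Lmx (u n) (y s) o) (ACmx n o))).
rewrite (eq_bigr (fun s => castmx (esym (expS2 n), esym (expS2 n)) (ACmx n.+1 (y s))));
  last by move=> s _; rewrite ACmx_succ castmxK.
rewrite -castmx_prod castmxE; congr (_ _ _); apply: val_inj => //=.
by rewrite -expS2; have := expn2_gt0 n; lia.
Qed.

End TransferMatrix.

Section NormalOrdering.
Variables (R : comPzRingType) (p N : nat).
Variables (D : 'I_N -> 'M[R]_p) (th : 'I_N -> 'I_N -> R).
Hypothesis D_comm : forall j k, j != k -> D j * D k = th j k *: (D k * D j).
Hypothesis D_sqr : forall j, D j * D j = 0.

Definition decreasing (r : seq 'I_N) := sorted (fun i k : 'I_N => (k < i)%N) r.

Lemma decreasing_cons k r :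
  decreasing (k :: r) -> decreasing r /\ (forall i, i \in r -> (i < k)%N).
Proof.
move=> dec_kr; split; first exact: path_sorted dec_kr.
have gt_trans : transitive (fun i k : 'I_N => (k < i)%N).
  by move=> j i l lt_ji lt_lj; exact: ltn_trans lt_lj lt_ji.
by apply/allP; exact: order_path_min dec_kr.
Qed.

Lemma decreasing_rev_enum : decreasing (rev (enum 'I_N)).
Proof.
rewrite /decreasing rev_sorted.
by have := iota_ltn_sorted 0 N; rewrite -val_enum_ord sorted_map.
Qed.

Lemma mulD_prod_eq0 (r : seq 'I_N) (P : pred 'I_N) j :
  decreasing r -> j \in r -> P j -> D j * \prod_(k <- r | P k) D k = 0.
Proof.
elim: r => [|k r IHr] // dec_kr; have [dec_r lt_r] := decreasing_cons dec_kr.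
rewrite inE => /orP [/eqP -> | r_j] Pj; first by rewrite big_cons Pj mulrA D_sqr mul0r.
rewrite big_cons; case: ifP => Pk; last exact: IHr.
have ne_jk : j != k by apply: contraTneq (lt_r _ r_j) => ->; rewrite ltnn.
by rewrite mulrA D_comm // scalemx_mull -mulrA IHr // mulr0 scaler0.
Qed.

(* Moving D j to its place in a decreasing word picks up th j k for every larger k it crosses. *)
Lemma mulD_prod_insert (r : seq 'I_N) (P : pred 'I_N) j :
  decreasing r -> j \in r -> ~~ P j ->
  D j * \prod_(k <- r | P k) D k
  = (\prod_(k <- r | P k && (j < k)%N) th j k) *: \prod_(k <- r | P k || (k == j)) D k.
Proof.
elim: r => [|k r IHr] // dec_kr; have [dec_r lt_r] := decreasing_cons dec_kr.
rewrite inE => /orP [/eqP eq_jk | r_j] nPj.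
  subst k; rewrite !big_cons (negbTE nPj) eqxx ltnn /=.
  have -> : \prod_(k <- r | P k && (j < k)%N) th j k = 1.
    apply: big1_seq => i /andP [/andP [_ lt_ji] /lt_r lt_ij].
    by move: (ltn_trans lt_ji lt_ij); rewrite ltnn.
  rewrite scale1r; congr (D j * _); rewrite big_seq_cond [RHS]big_seq_cond; apply: eq_bigl => i.
  case: (boolP (i \in r)) => //= r_i.
  by case: (i =P j) => [eq_ij|]; [move: (lt_r _ r_i); rewrite eq_ij ltnn | rewrite orbF].
have lt_jk := lt_r _ r_j.
have ne_kj : k != j by apply: contraTneq lt_jk => ->; rewrite ltnn.
rewrite !big_cons (negbTE ne_kj) orbF lt_jk andbT.
case: ifP => Pk; last by rewrite IHr.
rewrite mulrA D_comm 1?eq_sym // scalemx_mull -mulrA IHr // scalemx_mulr scalerA.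
by rewrite mulrC.
Qed.

Fixpoint reorder_coef (js : seq 'I_N) : R :=
  if js is j :: js' then
    (\prod_(k <- rev (enum 'I_N) | (k \in js') && (j < k)%N) th j k) * reorder_coef js'
  else 1.

Lemma prod_D_reorder (js : seq 'I_N) :
  \prod_(j <- js) D j
  = if uniq js then reorder_coef js *: \prod_(k <- rev (enum 'I_N) | k \in js) D k else 0.
Proof.
elim: js => [|j js IHjs] /=.
  by rewrite big_nil big_pred0 ?scale1r // => k; rewrite in_nil.
rewrite big_cons IHjs; case: (boolP (uniq js)) => uniq_js; last by rewrite andbF mulr0.
rewrite andbT scalemx_mulr; case: (boolP (j \in js)) => js_j /=.
  by rewrite mulD_prod_eq0 ?scaler0 ?decreasing_rev_enum // mem_rev mem_enum.
rewrite mulD_prod_insert ?decreasing_rev_enum ?mem_rev ?mem_enum // scalerA mulrC.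
by congr (_ *: _); apply: eq_bigl => k; rewrite in_cons orbC.
Qed.

Lemma reorder_coef_map (s : 'S_N) (l : seq 'I_N) : decreasing l ->
  reorder_coef (map s l)
  = \prod_(jk : 'I_N * 'I_N |
       [&& jk.1 \in l, jk.2 \in l, (jk.1 < jk.2)%N & (s jk.2 < s jk.1)%N])
      th (s jk.2) (s jk.1).
Proof.
elim: l => [|i l IHl] dec_il /=.
  by rewrite big_pred0 // => jk; rewrite in_nil.
have [dec_l lt_l] := decreasing_cons dec_il.
have l'i : i \notin l by apply/negP => /lt_l; rewrite ltnn.
rewrite IHl // [RHS](bigID (fun jk : 'I_N * 'I_N => jk.2 == i)) /=.
congr (_ * _).
  rewrite big_rev enum_index_enum (reindex_inj (@perm_inj _ s)) /=.
  rewrite (eq_bigl (fun jk : 'I_N * 'I_N => ((jk.1 \in l) && (s i < s jk.1)%N) && (jk.2 == i))).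
    rewrite -(pair_big_dep (fun j => (j \in l) && (s i < s j)%N) (fun _ k => k == i)
                (fun j k => th (s k) (s j))) /=.
    apply: eq_big => [j|j _]; first by rewrite (mem_map (@perm_inj _ s)).
    by rewrite big_pred1_eq.
  move=> [j k] /=; case: (k =P i) => [->|_]; rewrite ?andbF //= !andbT !inE ?eqxx /=.
  case: (boolP (j \in l)) => l_j; first by rewrite orbT (lt_l _ l_j).
  by rewrite orbF; case: (j =P i) => [->|]; rewrite ?ltnn.
apply: eq_bigl => [[j k]] /=; rewrite !inE.
case: (k =P i) => [->|_] /=; first by rewrite (negbTE l'i) !andbF.
case: (boolP (k \in l)) => l_k /=; last by rewrite !andbF.
case: (j =P i) => [->|_] /=; last by rewrite andbT.
by rewrite (negbTE l'i) ltnNge (ltnW (lt_l _ l_k)).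
Qed.

Lemma reorder_coef_perm (s : 'S_N) :
  reorder_coef (map s (rev (enum 'I_N)))
  = \prod_(jk : 'I_N * 'I_N | (jk.1 < jk.2)%N && (s jk.2 < s jk.1)%N) th (s jk.2) (s jk.1).
Proof.
rewrite reorder_coef_map ?decreasing_rev_enum //; apply: eq_bigl => jk.
by rewrite !mem_rev !mem_enum.
Qed.

End NormalOrdering.

Section Model.
Variables (R : numClosedFieldType) (t a b c d e f : R) (u : nat -> R).

Lemma unitmx_Amx n :
  (forall m, (m < n)%N -> a * u m + b != 0 /\ e * u m + f != 0) ->
  Amx t a b c d e f u n \in unitmx.
Proof.
rewrite unitmxE unitfE; elim: n => [|n IHn] nz_u; first by rewrite /Amx det1 oner_neq0.
rewrite /Amx /= det_castmx /kron2 add_block_mx !mxE /=.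
rewrite !scale0r !addr0 !add0r det_lblock !detZ.
have [nz_ab nz_ef] := nz_u n (ltnSn n).
by rewrite !mulf_neq0 ?expf_neq0 ?IHn // => m /ltnW /nz_u.
Qed.

Variable N' : nat.
Local Notation N := N'.+1.
Local Notation A := (Amx t a b c d e f u N).
Variable Cj : 'I_N -> 'M[R]_(2 ^ N).
Hypothesis ab_neq0 : forall j : 'I_N, a * u j + b != 0.
Hypothesis ef_neq0 : forall j : 'I_N, e * u j + f != 0.
Hypothesis tu_neq : forall j k : 'I_N, j != k -> t * u j != u k.

Definition ratio (j : 'I_N) := (e * u j + f) / (a * u j + b).
Definition theta (j k : 'I_N) := (u j - t * u k) / (t * u j - u k).

Hypothesis Cj_Amx : forall j : 'I_N, Cj j *m A = ratio j *: (A *m Cj j).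
Hypothesis Cj_sqr : forall j : 'I_N, Cj j *m Cj j = 0.
Hypothesis Cj_comm : forall j k : 'I_N, j != k ->
  Cj j *m Cj k
  = ((e * u j + f) * (a * u k + b) * (u j - t * u k)
     / ((a * u j + b) * (e * u k + f) * (t * u j - u k))) *: (Cj k *m Cj j).

Lemma ratio_neq0 j : ratio j != 0.
Proof. by rewrite mulf_neq0 ?invr_eq0. Qed.

Lemma unitmx_A : A \in unitmx.
Proof.
apply: unitmx_Amx => m lt_mN.
by have := ab_neq0 (Ordinal lt_mN); have := ef_neq0 (Ordinal lt_mN).
Qed.

Local Notation Ai := (invmx A).

Definition Dmx j := Cj j * Ai.

Lemma Cj_Dmx j : Cj j = Dmx j * A.
Proof. by rewrite /Dmx -mulrA [Ai * A](mulVmx unitmx_A) mulr1. Qed.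

Lemma invA_Cj j : Ai * Cj j = ratio j *: Dmx j.
Proof.
transitivity (Ai * (Cj j * A) * Ai).
  by rewrite -!mulrA [A * Ai](mulmxV unitmx_A) mulr1.
rewrite [Cj j * A]Cj_Amx scalemx_mulr scalemx_mull mulrA.
by rewrite [Ai * A](mulVmx unitmx_A) mul1r.
Qed.

Lemma Dmx_A j : Dmx j * A = ratio j *: (A * Dmx j).
Proof.
rewrite -Cj_Dmx /Dmx mulrA -scalemx_mull -[_ *: _]Cj_Amx -mulrA.
by rewrite [A * Ai](mulmxV unitmx_A) mulr1.
Qed.

Lemma Dmx_mulE j k : Dmx j * Dmx k = ratio k *: (Cj j * Cj k * Ai * Ai).
Proof. by rewrite /Dmx mulrA -(mulrA (Cj j)) invA_Cj scalemx_mulr scalemx_mull mulrA. Qed.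

Lemma Dmx_sqr j : Dmx j * Dmx j = 0.
Proof. by rewrite Dmx_mulE [Cj j * Cj j]Cj_sqr !mul0r scaler0. Qed.

Lemma Dmx_comm j k : j != k -> Dmx j * Dmx k = theta j k *: (Dmx k * Dmx j).
Proof.
move=> ne_jk; rewrite !Dmx_mulE [Cj j * Cj k]Cj_comm // !scalemx_mull !scalerA.
congr (_ *: _); have nz_t : t * u j - u k != 0 by rewrite subr_eq0 tu_neq.
rewrite /ratio /theta; field.
by rewrite ab_neq0 ab_neq0 ef_neq0 nz_t.
Qed.

Lemma Dmx_expA j k : Dmx j * A ^+ k = ratio j ^+ k *: (A ^+ k * Dmx j).
Proof.
elim: k => [|k IHk]; first by rewrite !expr0 mulr1 mul1r scale1r.
rewrite exprS mulrA Dmx_A scalemx_mull -[A * Dmx j * _]mulrA IHk scalemx_mulr scalerA mulrA.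
by rewrite [ratio j ^+ k.+1]exprS.
Qed.

Lemma expA_Dmx j k : A ^+ k * Dmx j = (ratio j ^+ k)^-1 *: (Dmx j * A ^+ k).
Proof. by rewrite Dmx_expA scalerA mulVf ?scale1r // expf_neq0 // ratio_neq0. Qed.

Variables (M : nat) (x : 'I_N -> nat).
Hypothesis sum_Cj : \sum_(j < N) Cj j = Cmx t a b c d e f u N.
Hypothesis x_range : forall j : 'I_N, (1 <= x j <= M)%N.
Hypothesis x_incr : forall j k : 'I_N, (j < k)%N -> (x j < x k)%N.

(* Sites are numbered from 0 here, particle positions x j from 1. *)
Definition occupied (m : nat) := [exists j : 'I_N, x j == m.+1].

Definition site_factor (m : nat) :=
  if occupied m then \sum_(j < N) ratio j ^+ m.+1 *: Dmx j else 1.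

Definition particle_factor (j : 'I_N) := \sum_(k < N) ratio k ^+ x j *: Dmx k.

(* Writing C = sum_j D j A and pushing every A to the left through the D's. *)
Lemma prod_ACmx_occupied n :
  \prod_(m <- rev (iota 0 n)) ACmx t a b c d e f u N (occupied m)
  = A ^+ n * \prod_(m <- rev (iota 0 n)) site_factor m.
Proof.
elim: n => [|n IHn]; first by rewrite !big_nil expr0 mulr1.
rewrite rev_iotaS !big_cons IHn /ACmx /site_factor.
case: ifP => _; last by rewrite mul1r mulrA -exprS.
rewrite -sum_Cj !big_distrl big_distrr /=; apply: eq_bigr => j _.
rewrite Cj_Dmx -mulrA (mulrA A) -exprS [Dmx j * _]mulrA Dmx_expA.
by rewrite !scalemx_mull scalemx_mulr mulrA.
Qed.

Lemma occupied_sites : filter occupied (iota 0 M) = map (fun j => (x j).-1) (enum 'I_N).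
Proof.
apply: (irr_sorted_eq ltn_trans ltnn).
- exact: (sorted_filter ltn_trans _ (iota_ltn_sorted 0 M)).
- rewrite sorted_map.
  have := iota_ltn_sorted 0 N; rewrite -val_enum_ord sorted_map.
  apply: sub_sorted => i j /= lt_ij.
  have := x_incr lt_ij; have := x_range i; have := x_range j; lia.
move=> m; rewrite mem_filter mem_iota /=; apply/andP/mapP.
  by move=> [/existsP [j /eqP xj] _]; exists j; rewrite ?mem_enum ?xj.
move=> [j _ ->]; have := x_range j; split; last by lia.
by apply/existsP; exists j; rewrite prednK //; lia.
Qed.

Lemma prod_site_factor :
  \prod_(m <- rev (iota 0 M)) site_factor m = \prod_(j <- rev (enum 'I_N)) particle_factor j.
Proof.
rewrite /site_factor -big_mkcond -big_filter filter_rev occupied_sites -map_rev big_map.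
by apply: eq_bigr => j _; rewrite prednK //; have := x_range j; lia.
Qed.

Definition Dmx_ordered := \prod_(k <- rev (enum 'I_N)) Dmx k.

(* Only the words in which every D k occurs exactly once survive, one for each permutation. *)
Lemma prod_particle_factor :
  \prod_(j <- rev (enum 'I_N)) particle_factor j
  = (\sum_(s : 'S_N) reorder_coef theta (map s (rev (enum 'I_N)))
                     * \prod_(j <- rev (enum 'I_N)) ratio (s j) ^+ x j) *: Dmx_ordered.
Proof.
have uniq_mapE (g : {ffun 'I_N -> 'I_N}) : uniq (map g (rev (enum 'I_N))) = injectiveb g.
  by rewrite map_rev rev_uniq.
rewrite (big_rev_enum_distr (fun j k => ratio k ^+ x j *: Dmx k)) scaler_suml.
under eq_bigr => g _ do rewrite scalemx_prod -(big_map g xpredT Dmx)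
  (prod_D_reorder Dmx_comm Dmx_sqr) uniq_mapE.
rewrite (bigID (fun g : {ffun 'I_N -> 'I_N} => injectiveb g)) /=.
rewrite [X in _ + X]big1 ?addr0 => [|g /negbTE ->]; last by rewrite scaler0.
rewrite (reindex (@pval _)) /=; last first.
  by exists (insubd (1%g : 'S_N)) => /= g inj_g; first apply: val_inj; apply: insubdK.
apply: eq_big => [s | s _]; first by rewrite (valP s).
rewrite (valP s) pvalE scalerA mulrC; congr ((_ * _) *: _).
by apply: eq_bigl => k; rewrite map_rev mem_rev -codomE perm_onto.
Qed.

Lemma expA_prod_Dmx n : (n <= N)%N ->
  A ^+ n * \prod_(m <- rev (iota 0 n)) Dmx (inord m)
  = (\prod_(m < n) (ratio (inord m) ^+ m.+1)^-1) *: \prod_(m <- rev (iota 0 n)) Cj (inord m).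
Proof.
elim: n => [|n IHn] lt_nN; first by rewrite !big_nil big_ord0 expr0 mul1r scale1r.
rewrite big_ord_recr rev_iotaS !big_cons /= mulrA expA_Dmx scalemx_mull.
rewrite [A ^+ n.+1]exprS [Dmx _ * _]mulrA -Cj_Dmx -mulrA IHn ?(ltnW lt_nN) //.
by rewrite scalemx_mulr scalerA mulrC.
Qed.

Lemma expA_Dmx_ordered :
  A ^+ N * Dmx_ordered = (\prod_(j < N) (ratio j ^+ j.+1)^-1) *: Cprod Cj.
Proof.
have -> : Cprod Cj = \prod_(k <- rev (enum 'I_N)) Cj k.
  by rewrite /Cprod; elim: (rev _) => [|k l /= ->]; rewrite ?big_nil ?big_cons.
rewrite /Dmx_ordered !big_rev_enum_inord expA_prod_Dmx //.
by congr (_ *: _); apply: eq_bigr => j _; rewrite inord_val.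
Qed.

Hypothesis N_le_M : (N <= M)%N.

Lemma Bvec_config :
  Bvec t a b c d e f u N (config M x)
  = (\prod_(j < N) (ratio j ^+ j.+1)^-1) * (A ^+ (M - N) * Cprod Cj) (zeros_idx N) (ones_idx N)
    * \sum_(s : 'S_N)
        ((\prod_(jk : 'I_N * 'I_N | (jk.1 < jk.2)%N && (s jk.2 < s jk.1)%N)
            theta (s jk.2) (s jk.1))
         * \prod_(j < N) ratio (s j) ^+ x j).
Proof.
rewrite Bvec_ACmx.
have -> : \prod_(s <- rev (enum 'I_M)) ACmx t a b c d e f u N (config M x s)
          = \prod_(m <- rev (iota 0 M)) ACmx t a b c d e f u N (occupied m).
  by rewrite -big_rev_enum_iota; apply: eq_bigr => s _; rewrite ffunE.
rewrite prod_ACmx_occupied prod_site_factor prod_particle_factor -(subnK N_le_M) addnK.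
rewrite exprD -mulrA scalemx_mulr expA_Dmx_ordered !scalemx_mulr scalerA mxE.
under eq_bigr => s _ do rewrite reorder_coef_perm big_rev enum_index_enum.
by rewrite -mulrA mulrC.
Qed.

End Model.

Theorem mainTheorem3 (R : numClosedFieldType) (t a b c d e f : R)
  (ht0 : t != 0) (ha : a != 0) (hb : b != 0) (hc : c != 0) (hd : d != 0)
  (he : e != 0) (hf : f != 0) (ht1 : t != 1)
  (hcd1 : c * d + a * f = 0) (hcd2 : t * c * d + b * e = 0)
  (M N : nat) (hN1 : (1 <= N)%N) (hNM : (N <= M)%N)
  (u : nat -> R)
  (hdist : forall j k : 'I_N, j != k -> u j != u k)
  (hab : forall j : 'I_N, a * u j + b != 0)
  (hef : forall j : 'I_N, e * u j + f != 0)
  (htu : forall j k : 'I_N, j != k -> t * u j != u k)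
  (Cj : 'I_N -> 'M[R]_(2 ^ N))
  (hsum : \sum_(j < N) Cj j = Cmx t a b c d e f u N)
  (hCA : forall j : 'I_N,
     Cj j *m Amx t a b c d e f u N
     = ((e * u j + f) / (a * u j + b)) *: (Amx t a b c d e f u N *m Cj j))
  (hCC : forall j : 'I_N, Cj j *m Cj j = 0)
  (hCjk : forall j k : 'I_N, j != k ->
     Cj j *m Cj k
     = ((e * u j + f) * (a * u k + b) * (u j - t * u k)
        / ((a * u j + b) * (e * u k + f) * (t * u j - u k))) *: (Cj k *m Cj j))
  (x : 'I_N -> nat)
  (hx1 : forall j : 'I_N, (1 <= x j <= M)%N)
  (hxinc : forall j k : 'I_N, (j < k)%N -> (x j < x k)%N) :
  let K := (\prod_(j < N) ((a * u j + b) / (e * u j + f)) ^+ j.+1)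
           * \tr (Qmx N *m mxpow (Amx t a b c d e f u N) (M - N) *m Cprod Cj) in
  Bvec t a b c d e f u N (config M x)
  = K * \sum_(s : 'S_N)
          ((\prod_(jk : 'I_N * 'I_N | (jk.1 < jk.2)%N && (s jk.2 < s jk.1)%N)
              ((u (s jk.2) - t * u (s jk.1)) / (t * u (s jk.2) - u (s jk.1))))
           * \prod_(j < N) ((e * u (s j) + f) / (a * u (s j) + b)) ^+ (x j)).
Proof.
case: N hN1 hNM hdist hab hef htu Cj hsum hCA hCC hCjk x hx1 hxinc => // N' _ hNM _
  hab hef htu Cj hsum hCA hCC hCjk x hx1 hxinc K.
rewrite (Bvec_config hab hef htu hCA hCC hCjk hsum hx1 hxinc hNM).
rewrite /K -mulmxA mxtrace_Qmx mxpowE; congr (_ * _ * _).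
by apply: eq_bigr => j _; rewrite -exprVn invf_div.
Qed.
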